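(* Let $X$ be a semigroup and $S$ be one of the semigroups $\beta(X),\lambda(X),\varphi(X),N_2(X),\upsilon(X)$. If $S$ is regular, then for every subsemigroup $Z\subset X$ whose complement $X\setminus Z$ is an ideal in $X$, the semigroup $S\cap\upsilon(Z)$ is regular.
   Context: An upfamily on a set $X$ is a family of nonempty subsets of $X$ closed under taking supersets in $X$; $\upsilon(X)$ is the set of all upfamilies. $N_2(X)$, $\lambda(X)$, $\varphi(X)$, $\beta(X)$ are the sets of linked upfamilies (any two members intersect), maximal linked upfamilies, filters, and ultrafilters on $X$. The operation is $\mathcal A*\mathcal B=\big\langle \bigcup_{a\in A} a*B_a : A\in\mathcal A,\ \{B_a\}_{a\in A}\subset\mathcal B\big\rangle$, where $\langle\mathcal C\rangle=\{A\subset X:\exists C\in\mathcal C,\ C\subset A\}$; all these sets are subsemigroups of $\upsilon(X)$. For $Z\subset X$, $\upsilon(Z)$ is identified with the subset of $\upsilon(X)$ consisting of the upfamilies $\{A\subset X: A\cap Z\in\mathcal F\}$, $\mathcal F\in\upsilon(Z)$. A semigroup $S$ is regular if $x\in xSx$ for every $x\in S$. A nonempty $I\subset X$ is an ideal if $XI\cup IX\subset I$. *)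

From Stdlib Require Import Classical.

Set Implicit Arguments.

Definition set (X : Type) := X -> Prop.
Definition fam (X : Type) := set X -> Prop.

Section UpFamilies.
Variable X : Type.
Variable mul : X -> X -> X.

Definition subset (A B : set X) : Prop := forall x, A x -> B x.
Definition nonempty (A : set X) : Prop := exists x, A x.

Definition fam_eq (F G : fam X) : Prop := forall A, F A <-> G A.
Definition fam_sub (F G : fam X) : Prop := forall A, F A -> G A.

Definition upfamily (F : fam X) : Prop :=
  (forall A, F A -> nonempty A) /\
  (forall A B, F A -> subset A B -> F B).

Definition linked (F : fam X) : Prop :=
  upfamily F /\ forall A B, F A -> F B -> exists x, A x /\ B x.

Definition maximal_linked (F : fam X) : Prop :=
  linked F /\ forall G, linked G -> fam_sub F G -> fam_sub G F.

Definition filter (F : fam X) : Prop :=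
  upfamily F /\ F (fun _ => True) /\
  forall A B, F A -> F B -> F (fun x => A x /\ B x).

Definition ultrafilter (F : fam X) : Prop :=
  filter F /\ forall G, filter G -> fam_sub F G -> fam_sub G F.

(* the operation  A * B = < U_{a in A} a*B_a : A in A, {B_a}_{a in A} in B > *)
Definition fmul (FA FB : fam X) : fam X := fun C =>
  exists A, FA A /\
  exists Bf : X -> set X,
    (forall a, A a -> FB (Bf a)) /\
    (forall a b, A a -> Bf a b -> C (mul a b)).

Inductive kind := Kbeta | Klambda | Kphi | KN2 | Kupsilon.

Definition inS (k : kind) (F : fam X) : Prop :=
  match k with
  | Kbeta => ultrafilter F
  | Klambda => maximal_linked F
  | Kphi => filter F
  | KN2 => linked F
  | Kupsilon => upfamily F
  end.

Definition regular (P : fam X -> Prop) : Prop :=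
  forall x, P x -> exists y, P y /\ fam_eq x (fmul (fmul x y) x).

Definition upfamily_on (Z : set X) (G : fam X) : Prop :=
  (forall A, G A -> subset A Z /\ nonempty A) /\
  (forall A B, G A -> subset A B -> subset B Z -> G B).

(* F belongs to upsilon(Z), viewed inside upsilon(X) via
   G |-> {A : A cap Z in G} *)
Definition in_upsilon_sub (Z : set X) (F : fam X) : Prop :=
  exists G, upfamily_on Z G /\ forall A, F A <-> G (fun x => A x /\ Z x).

Definition subsemigroup (Z : set X) : Prop :=
  nonempty Z /\ forall x y, Z x -> Z y -> Z (mul x y).

Definition is_ideal (I : set X) : Prop :=
  nonempty I /\ forall x y, I y -> I (mul x y) /\ I (mul y x).

End UpFamilies.

(* Let F ∈ S ∩ υ(Z) and F = F*y*F with y ∈ S.  Since X \ Z is an ideal, a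
   product a*b lies in Z only if both a and b do; as every member of F
   contains a member inside Z, the families y used in F*y*F can be replaced
   by their traces on Z: F ⊆ F*y|Z*F, where y|Z = {A : A ∩ Z ∈ y}
   ([fmul_trace_of_regular]).  The trace y|Z lies in υ(Z) and below y, so
   F = F*y|Z*F by monotonicity of the product ([regular_sandwich]); this
   settles υ and N_2, where y|Z ∈ S.  For filters and ultrafilters y already
   contains Z, hence y = y|Z ∈ υ(Z).  For maximal linked families, y|Z is
   extended by Zorn's lemma to a maximal linked family M ∈ υ(Z)
   ([maximal_linked_Zclosed_extension]); then F ⊆ F*M*F, and equality holds
   because F*M*F is linked and F is maximal linked. *)
From mathcomp Require classical_sets boolp.
From Stdlib Require Import Classical.
Set Implicit Arguments.

Lemma zorn_families (T : Type) (P : fam T -> Prop) (G0 : fam T) :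
  P G0 ->
  (forall Ch : fam T -> Prop, (forall G, Ch G -> P G) ->
     (forall G H, Ch G -> Ch H -> fam_sub G H \/ fam_sub H G) ->
     exists U, P U /\ forall G, Ch G -> fam_sub G U) ->
  exists M, P M /\ forall G, P G -> fam_sub M G -> fam_sub G M.
Proof.
  intros P0 Hchain.
  set (R := fun s t : {G | P G} => boolp.asbool (fam_sub (proj1_sig s) (proj1_sig t))).
  destruct (@classical_sets.ZL_preorder _ (exist _ G0 P0) R) as [[M PM] HM].
  - intros s; apply boolp.asboolT; intros A h; exact h.
  - intros r s t hrs hst; apply boolp.asboolT.
    apply boolp.asboolW in hrs; apply boolp.asboolW in hst.
    intros A h; auto.
  - intros Ch Htot.
    destruct (Hchain (fun G => exists s, Ch s /\ proj1_sig s = G)) as [U [PU HU]].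
    + intros G [s [_ <-]]; exact (proj2_sig s).
    + intros G H [s [hs <-]] [t [ht <-]].
      destruct (Htot s t hs ht) as [h|h]; apply boolp.asboolW in h; auto.
    + exists (exist _ U PU); intros s hs; apply boolp.asboolT.
      apply HU; exists s; auto.
  - exists M; split; [exact PM|]. intros G PG hMG.
    apply (boolp.asboolW (HM (exist _ G PG) (boolp.asboolT hMG))).
Qed.

Lemma inS_upfamily (X : Type) (k : kind) (F : fam X) : inS k F -> upfamily F.
Proof.
  destruct k; simpl; intro h.
  - exact (proj1 (proj1 h)).
  - exact (proj1 (proj1 h)).
  - exact (proj1 h).
  - exact (proj1 h).
  - exact h.
Qed.

Section Traces.
Variables (X : Type) (Z : set X).

Definition inter (A : set X) : set X := fun x => A x /\ Z x.

Definition trace (F : fam X) : fam X := fun A => F (inter A).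

Definition Zclosed (F : fam X) : Prop := forall A, F A -> F (inter A).

Lemma inter_sub (A : set X) : subset (inter A) A.
Proof. intros x [h _]; exact h. Qed.

Lemma Zclosed_in_upsilon_sub (G : fam X) :
  upfamily G -> Zclosed G -> in_upsilon_sub Z G.
Proof.
  intros [Gn Gu] Gc. exists (fun A => G A /\ subset A Z). split; [split|].
  - intros A [HA HZ]; auto.
  - intros A B [HA _] HAB HBZ; split; [eapply Gu; eauto | auto].
  - intro A; split.
    + intro HA; split; [exact (Gc _ HA) | intros x [_ h]; exact h].
    + intros [HA _]; eapply Gu; [exact HA | apply inter_sub].
Qed.

Lemma in_upsilon_sub_Zclosed (F : fam X) : in_upsilon_sub Z F -> Zclosed F.
Proof.
  intros [G [[_ Gu] HG]] C HC.
  apply HG. apply HG in HC. eapply Gu; [exact HC | |].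
  - intros x [h1 h2]; split; [split|]; auto.
  - intros x [_ h]; exact h.
Qed.

Lemma trace_upfamily (F : fam X) : upfamily F -> upfamily (trace F).
Proof.
  intros [Fn Fu]; split.
  - intros A h. destruct (Fn _ h) as [x [hx _]]; exists x; exact hx.
  - intros A B h hAB. eapply Fu; [exact h|]. intros x [h1 h2]; split; auto.
Qed.

Lemma trace_linked (F : fam X) : linked F -> linked (trace F).
Proof.
  intros [FU Fl]; split; [exact (trace_upfamily FU)|].
  intros A B hA hB. destruct (Fl _ _ hA hB) as [x [[h1 _] [h2 _]]].
  exists x; auto.
Qed.

Lemma trace_Zclosed (F : fam X) : upfamily F -> Zclosed (trace F).
Proof.
  intros [_ Fu] A h. eapply Fu; [exact h|].
  intros x [h1 h2]; split; [split|]; auto.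
Qed.

Lemma trace_sub (F : fam X) : upfamily F -> fam_sub (trace F) F.
Proof. intros [_ Fu] A h; eapply Fu; [exact h | apply inter_sub]. Qed.

Lemma filter_Zclosed (F : fam X) : filter F -> F Z -> Zclosed F.
Proof. intros [_ [_ Fi]] FZ A h; exact (Fi _ _ h FZ). Qed.

Definition Zlinked_above (y0 G : fam X) : Prop :=
  linked G /\ fam_sub y0 G /\ Zclosed G.

Lemma Zlinked_chain_union (y0 : fam X) (Ch : fam X -> Prop) :
  Zlinked_above y0 y0 -> (forall G, Ch G -> Zlinked_above y0 G) ->
  (forall G H, Ch G -> Ch H -> fam_sub G H \/ fam_sub H G) ->
  Zlinked_above y0 (fun B => y0 B \/ exists G, Ch G /\ G B).
Proof.
  intros [[[yn yu] yl] [_ yc]] HCh Htot.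
  split; [split; [split|] | split].
  - intros B [h|[G [hG h]]]; [auto|].
    destruct (HCh G hG) as [[[n _] _] _]; auto.
  - intros B C [h|[G [hG h]]] hBC; [left; eauto|].
    right; exists G; split; [exact hG|].
    destruct (HCh G hG) as [[[_ u] _] _]; eauto.
  - intros B C [h|[G [hG h]]] [h'|[H [hH h']]].
    + auto.
    + destruct (HCh H hH) as [[_ l] [sub _]]; auto.
    + destruct (HCh G hG) as [[_ l] [sub _]]; auto.
    + destruct (Htot G H hG hH) as [r|r].
      * destruct (HCh H hH) as [[_ l] _]; auto.
      * destruct (HCh G hG) as [[_ l] _]; auto.
  - intros B h; left; exact h.
  - intros B [h|[G [hG h]]]; [left; auto|].
    right; exists G; split; [exact hG|].
    destruct (HCh G hG) as [_ [_ c]]; auto.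
Qed.

(* A linked Z-closed family containing Z that is maximal among linked
   Z-closed families is maximal among all linked families: for B in a
   larger linked family, adjoining the supersets of B ∩ Z stays linked and
   Z-closed, so B ∩ Z, hence B, is already a member. *)
Lemma Zmaximal_maximal_linked (M : fam X) :
  linked M -> Zclosed M -> M Z ->
  (forall G, linked G -> Zclosed G -> fam_sub M G -> fam_sub G M) ->
  maximal_linked M.
Proof.
  intros ML Mc MZ Mmax. split; [exact ML|].
  intros H [_ Hl] MH B HB.
  destruct ML as [[Mn Mu] Ml].
  destruct (Hl _ _ HB (MH _ MZ)) as [x0 [xb xz]].
  set (Mp := fun C => M C \/ subset (inter B) C).
  assert (MpL : linked Mp).
  { split; [split|].
    - intros C [h|h]; auto. exists x0; apply h; split; auto.
    - intros C D [h|h] hCD; [left; eauto | right; intros x hx; auto].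
    - intros C D [h|h] [h'|h'].
      + auto.
      + destruct (Hl _ _ HB (MH _ (Mc _ h))) as [x [h1 [h2 h3]]].
        exists x; split; auto. apply h'; split; auto.
      + destruct (Hl _ _ HB (MH _ (Mc _ h'))) as [x [h1 [h2 h3]]].
        exists x; split; auto. apply h; split; auto.
      + exists x0; split; [apply h | apply h']; split; auto. }
  assert (MpZ : Zclosed Mp).
  { intros C [h|h]; [left; auto | right].
    intros x hx; split; [apply h; auto | apply hx]. }
  assert (hBZ : M (inter B)).
  { apply (Mmax Mp MpL MpZ); [intros C h; left; exact h | right; intros x h; exact h]. }
  eapply Mu; [exact hBZ | apply inter_sub].
Qed.

Lemma maximal_linked_Zclosed_extension (y0 : fam X) :
  linked y0 -> y0 Z -> Zclosed y0 ->
  exists M, maximal_linked M /\ fam_sub y0 M /\ Zclosed M.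
Proof.
  intros yL yZ yc.
  assert (P0 : Zlinked_above y0 y0).
  { split; [exact yL | split; [intros A h; exact h | exact yc]]. }
  destruct (@zorn_families X (Zlinked_above y0) y0 P0) as [M [[ML [Msub Mc]] Mmax]].
  - intros Ch HCh Htot. eexists; split; [exact (@Zlinked_chain_union y0 Ch P0 HCh Htot)|].
    intros G hG B h; right; exists G; auto.
  - exists M; split; [|split; auto].
    apply Zmaximal_maximal_linked; auto.
    intros G GL Gc hMG. apply Mmax; [|exact hMG].
    split; [exact GL | split; [intros A h; auto | exact Gc]].
Qed.

End Traces.

Section Products.
Variables (X : Type) (mul : X -> X -> X).

Lemma fmul_mono (A A' B B' : fam X) :
  fam_sub A A' -> fam_sub B B' -> fam_sub (fmul mul A B) (fmul mul A' B').
Proof.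
  intros HA HB C [D [HD [Bf [H1 H2]]]].
  exists D; split; [auto|]. exists Bf; split; auto.
Qed.

Lemma fmul_upward (A B : fam X) (C C' : set X) :
  fmul mul A B C -> subset C C' -> fmul mul A B C'.
Proof.
  intros [D [HD [Bf [H1 H2]]]] HC.
  exists D; split; [exact HD|]. exists Bf; split; [exact H1|].
  intros a b Ha Hb; apply HC; auto.
Qed.

Lemma fmul_linked (A B : fam X) :
  linked A -> linked B -> linked (fmul mul A B).
Proof.
  intros [[An Au] Al] [[Bn Bu] Bl]. split; [split|].
  - intros C [D [HD [Bf [H1 H2]]]].
    destruct (An _ HD) as [a Ha]. destruct (Bn _ (H1 a Ha)) as [b Hb].
    exists (mul a b); auto.
  - intros C C' HC HCC'; exact (fmul_upward HC HCC').
  - intros C C' [D [HD [Bf [H1 H2]]]] [D' [HD' [Bf' [H1' H2']]]].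
    destruct (Al _ _ HD HD') as [a [Ha Ha']].
    destruct (Bl _ _ (H1 a Ha) (H1' a Ha')) as [b [Hb Hb']].
    exists (mul a b); auto.
Qed.

Lemma regular_sandwich (F y y' : fam X) :
  fam_eq F (fmul mul (fmul mul F y) F) ->
  fam_sub F (fmul mul (fmul mul F y') F) -> fam_sub y' y ->
  fam_eq F (fmul mul (fmul mul F y') F).
Proof.
  intros Heq Hsub Hy C; split; [apply Hsub|].
  intro hC. apply Heq. revert hC; apply fmul_mono; [|intros A h; exact h].
  apply fmul_mono; [intros A h; exact h | exact Hy].
Qed.

Lemma maximal_linked_regular (F M : fam X) :
  maximal_linked F -> linked M -> fam_sub F (fmul mul (fmul mul F M) F) ->
  fam_eq F (fmul mul (fmul mul F M) F).
Proof.
  intros [FL Fmax] ML Hsub C; split; [apply Hsub|].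
  apply (Fmax _ (fmul_linked (fmul_linked FL ML) FL) Hsub).
Qed.

Lemma empty_regular (F y : fam X) :
  (forall A, ~ F A) -> fam_eq F (fmul mul (fmul mul F y) F).
Proof.
  intros Hne C; split; [intro h; exfalso; exact (Hne _ h)|].
  intros [D [[E [hE _]] _]]; exfalso; exact (Hne _ hE).
Qed.

Variable Z : set X.
Hypothesis compl_ideal : is_ideal mul (fun x => ~ Z x).

Lemma compl_ideal_factors (a b : X) : Z (mul a b) -> Z a /\ Z b.
Proof.
  destruct compl_ideal as [_ Hid]. intro hab; split; apply NNPP; intro hn.
  - exact (proj2 (Hid b a hn) hab).
  - exact (proj1 (Hid a b hn) hab).
Qed.

Lemma fmul_trace_sub (F y : fam X) (C : set X) :
  upfamily F -> upfamily y -> subset C Z ->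
  fmul mul (fmul mul F y) F C -> fmul mul (fmul mul F (trace Z y)) F C.
Proof.
  intros [Fn _] [_ yu] CZ [D [HD [Df [H1 H2]]]].
  assert (DZ : forall d, D d -> Z d).
  { intros d Hd. destruct (Fn _ (H1 d Hd)) as [e He].
    exact (proj1 (compl_ideal_factors (CZ _ (H2 d e Hd He)))). }
  destruct HD as [A [HA [Bf [K1 K2]]]].
  exists D; split; [| exists Df; auto].
  exists A; split; [exact HA|]. exists Bf; split; [|exact K2].
  intros a Ha. eapply yu; [exact (K1 a Ha)|].
  intros b Hb; split; [exact Hb|].
  exact (proj2 (compl_ideal_factors (DZ _ (K2 a b Ha Hb)))).
Qed.

Lemma fmul_trace_of_regular (F y : fam X) :
  upfamily F -> upfamily y -> in_upsilon_sub Z F ->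
  fam_eq F (fmul mul (fmul mul F y) F) ->
  fam_sub F (fmul mul (fmul mul F (trace Z y)) F).
Proof.
  intros FU yU FZ Heq C HC.
  apply fmul_upward with (C := inter Z C); [|apply inter_sub].
  apply fmul_trace_sub; [exact FU | exact yU | intros x [_ h]; exact h |].
  apply Heq, (in_upsilon_sub_Zclosed FZ), HC.
Qed.

Lemma trace_witness_Z (F y : fam X) (C : set X) :
  upfamily F -> upfamily y ->
  fmul mul (fmul mul F (trace Z y)) F C -> y Z.
Proof.
  intros [Fn _] [_ yu] [D [[A [HA [Bf [K1 _]]]] _]].
  destruct (Fn A HA) as [a Ha]. eapply yu; [exact (K1 a Ha)|].
  intros x [_ h]; exact h.
Qed.

Lemma regular_witness_in_upsilon_sub (k : kind) (F y : fam X) (C0 : set X) :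
  inS k F -> in_upsilon_sub Z F -> F C0 -> inS k y ->
  fam_eq F (fmul mul (fmul mul F y) F) ->
  exists y', (inS k y' /\ in_upsilon_sub Z y') /\
             fam_eq F (fmul mul (fmul mul F y') F).
Proof.
  intros FS FZ FC0 yS Heq.
  pose proof (inS_upfamily _ _ FS) as FU. pose proof (inS_upfamily _ _ yS) as yU.
  pose proof (fmul_trace_of_regular FU yU FZ Heq) as Htr.
  pose proof (trace_witness_Z FU yU (Htr _ FC0)) as yZ.
  pose proof (Zclosed_in_upsilon_sub (trace_upfamily Z yU) (trace_Zclosed Z yU)) as trZ.
  pose proof (regular_sandwich Heq Htr (trace_sub Z yU)) as trEq.
  destruct k; simpl in FS, yS.
  - exists y; split; [split; [exact yS|] | exact Heq].
    exact (Zclosed_in_upsilon_sub yU (filter_Zclosed Z (proj1 yS) yZ)).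
  - assert (trZZ : trace Z y Z) by (eapply (proj2 yU); [exact yZ | intros x h; split; exact h]).
    destruct (maximal_linked_Zclosed_extension (trace_linked Z (proj1 yS)) trZZ
                (trace_Zclosed Z yU)) as [M [ML [Msub Mc]]].
    exists M; split.
    + split; [exact ML | exact (Zclosed_in_upsilon_sub (proj1 (proj1 ML)) Mc)].
    + apply (maximal_linked_regular FS (proj1 ML)).
      assert (FF : fam_sub F F) by (intros A h; exact h).
      intros C hC; exact (fmul_mono (fmul_mono FF Msub) FF (Htr C hC)).
  - exists y; split; [split; [exact yS|] | exact Heq].
    exact (Zclosed_in_upsilon_sub yU (filter_Zclosed Z yS yZ)).
  - exists (trace Z y); split; [split; [exact (trace_linked Z yS) | exact trZ] | exact trEq].
  - exists (trace Z y); split; [split; [exact (trace_upfamily Z yS) | exact trZ] | exact trEq].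
Qed.

End Products.

Theorem corollary3p4 (X : Type) (mul : X -> X -> X)
  (assoc : forall x y z, mul x (mul y z) = mul (mul x y) z)
  (k : kind) :
  regular mul (inS k) ->
  forall Z : set X,
    subsemigroup mul Z ->
    is_ideal mul (fun x => ~ Z x) ->
    regular mul (fun F => inS k F /\ in_upsilon_sub Z F).
Proof.
  intros Hreg Z _ Hid F [FS FZ].
  destruct (classic (exists A, F A)) as [[C0 FC0] | Hne].
  - destruct (Hreg F FS) as [y [yS Heq]].
    exact (@regular_witness_in_upsilon_sub X mul Z Hid k F y C0 FS FZ FC0 yS Heq).
  - exists F; split; [split; auto|].
    apply empty_regular; intros A h; apply Hne; eauto.
Qed.
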